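(* Let $Y$ be a fixed point combinator, $f$ a variable, and $B'_Y \equiv Y(\lambda x.\, f x (f x (Y(\lambda y.\, f x y))))$. Then for every $n\ge0$, if the subtree of $\mathrm{BT}^c(B'_Y)$ at position $(12)^n2$ carries an annotation, that annotation is $0$.
   Context: Untyped $\lambda$-calculus modulo $\alpha$. A fixed point combinator is a term $Y$ with $Yz=_\beta z(Yz)$ for a variable $z$ not free in $Y$. Head reduction step: $\lambda x_1\ldots x_n.(\lambda y.P)QQ_1\ldots Q_m \to \lambda x_1\ldots x_n.P[y:=Q]Q_1\ldots Q_m$; hnf: $\lambda x_1\ldots x_n.\,yQ_1\ldots Q_m$. The clocked Böhm tree $\mathrm{BT}^c(M)$ is defined coinductively: $\bot$ if $M$ has no hnf; otherwise, if $M\to_h^k \lambda x_1\ldots x_n.\,yM_1\ldots M_m$ is the head reduction to hnf ($k$ steps), $\mathrm{BT}^c(M)$ is the tree $\lambda x_1\ldots x_n.\,y\,\mathrm{BT}^c(M_1)\ldots\mathrm{BT}^c(M_m)$ whose root node is annotated with $k$. Positions are sequences over $\{0,1,2\}$ in applicative notation: $0$ enters an abstraction body, $1$ the function part and $2$ the argument of an application (so in a tree $f\,S\,T=(fS)T$, $S$ is at position $12$ and $T$ at position $2$); $(12)^n2$ denotes $n$ repetitions of $12$ followed by $2$. *)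

(* Untyped lambda calculus with de Bruijn indices (= terms modulo alpha). *)
From Stdlib Require Import Arith List Relations.
Import ListNotations.

Inductive term : Type :=
| Var : nat -> term
| App : term -> term -> term
| Lam : term -> term.

Fixpoint lift (d c : nat) (t : term) : term :=
  match t with
  | Var n => if n <? c then Var n else Var (n + d)
  | App a b => App (lift d c a) (lift d c b)
  | Lam b => Lam (lift d (S c) b)
  end.

Fixpoint subst_at (j : nat) (s : term) (t : term) : term :=
  match t with
  | Var n => if n =? j then lift j 0 s
             else if j <? n then Var (n - 1) else Var n
  | App a b => App (subst_at j s a) (subst_at j s b)
  | Lam b => Lam (subst_at (S j) s b)
  end.

(* P[y := Q] for the body P of \y.P *)
Definition subst0 (P Q : term) : term := subst_at 0 Q P.

Fixpoint free_in (n : nat) (t : term) : Prop :=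
  match t with
  | Var m => m = n
  | App a b => free_in n a \/ free_in n b
  | Lam b => free_in (S n) b
  end.

Inductive beta : term -> term -> Prop :=
| beta_redex : forall P Q, beta (App (Lam P) Q) (subst0 P Q)
| beta_appl : forall M M' N, beta M M' -> beta (App M N) (App M' N)
| beta_appr : forall M N N', beta N N' -> beta (App M N) (App M N')
| beta_lam : forall M M', beta M M' -> beta (Lam M) (Lam M').

Definition beta_conv : relation term := clos_refl_sym_trans term beta.

Definition fpc (Y : term) : Prop :=
  exists z, ~ free_in z Y /\ beta_conv (App Y (Var z)) (App (Var z) (App Y (Var z))).

(* head reduction step:  \x1..xn.(\y.P) Q Q1..Qm -> \x1..xn. P[y:=Q] Q1..Qm *)
Definition is_lam (t : term) : Prop := match t with Lam _ => True | _ => False end.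

Inductive hstep : term -> term -> Prop :=
| hstep_redex : forall P Q, hstep (App (Lam P) Q) (subst0 P Q)
| hstep_app : forall M M' N, ~ is_lam M -> hstep M M' -> hstep (App M N) (App M' N)
| hstep_lam : forall M M', hstep M M' -> hstep (Lam M) (Lam M').

Inductive hsteps : nat -> term -> term -> Prop :=
| hsteps_0 : forall M, hsteps 0 M M
| hsteps_S : forall k M N P, hstep M N -> hsteps k N P -> hsteps (S k) M P.

(* head normal forms  \x1..xn. y Q1..Qm *)
Inductive hnf_body : term -> Prop :=
| hb_var : forall y, hnf_body (Var y)
| hb_app : forall B N, hnf_body B -> hnf_body (App B N).

Inductive hnf : term -> Prop :=
| hnf_body_ : forall B, hnf_body B -> hnf B
| hnf_lam : forall B, hnf B -> hnf (Lam B).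

(* positions: 0 = abstraction body, 1 = function part, 2 = argument *)
Inductive dir : Type := D0 | D1 | D2.
Definition position := list dir.

(* arg_at H p N : in the hnf H = \x1..xn. y M1..Mm, N = Mi sits at position p
   (p = 0^n 1^(m-i) 2) *)
Inductive arg_at : term -> position -> term -> Prop :=
| arg_lam : forall B p N, arg_at B p N -> arg_at (Lam B) (D0 :: p) N
| arg_here : forall B N, arg_at (App B N) [D2] N
| arg_fun : forall B N p N', arg_at B p N' -> arg_at (App B N) (D1 :: p) N'.

(* annot M p k : in the clocked Boehm tree BT^c(M), the subtree at position p
   is a node carrying annotation k *)
Inductive annot : term -> position -> nat -> Prop :=
| annot_root : forall M H k, hsteps k M H -> hnf H -> annot M [] k
| annot_sub : forall M H j p N q k,
    hsteps j M H -> hnf H -> arg_at H p N -> annot N q k -> annot M (p ++ q) k.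

Fixpoint pos12 (n : nat) : position :=
  match n with
  | 0 => [D2]
  | S n => D1 :: D2 :: pos12 n
  end.

(* B'_Y = Y (\x. f x (f x (Y (\y. f x y)))), f the free variable with index f *)
Definition Bprime (Y : term) (f : nat) : term :=
  App Y (Lam (App (App (Var (S f)) (Var 0))
                  (App (App (Var (S f)) (Var 0))
                       (App (lift 1 0 Y)
                            (Lam (App (App (Var (S (S f))) (Var 1)) (Var 0))))))).

From Stdlib Require Import Arith List Relations Lia.
Import ListNotations.

(* Take z with Y z =_beta z (Y z) and z not free in Y, and let
   F = \x. f x (f x (Y (\y. f x y))), so that B'_Y = (Y z)[z := F].  Head
   reduction commutes with this substitution, so for any N =_beta Y z the head
   reduction of N[z := F] first follows that of N; by Church-Rosser the hnf of
   N has the form z N1 with N1 =_beta Y z, and one more step yields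
   f A (f A R) with A = N1[z := F], already a hnf.  At positions 2 and 12 of
   this node sit f A R, an hnf and hence annotated 0, and A, which is of the
   same kind as N[z := F]; induction on n concludes. *)

Definition upren (xi : nat -> nat) (n : nat) : nat :=
  match n with 0 => 0 | S m => S (xi m) end.

Fixpoint ren (xi : nat -> nat) (t : term) : term :=
  match t with
  | Var n => Var (xi n)
  | App a b => App (ren xi a) (ren xi b)
  | Lam b => Lam (ren (upren xi) b)
  end.

Definition up (s : nat -> term) (n : nat) : term :=
  match n with 0 => Var 0 | S m => ren S (s m) end.

Fixpoint subst (s : nat -> term) (t : term) : term :=
  match t with
  | Var n => s n
  | App a b => App (subst s a) (subst s b)
  | Lam b => Lam (subst (up s) b)
  end.

Lemma ren_ext t : forall xi zeta, (forall n, xi n = zeta n) -> ren xi t = ren zeta t.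
Proof.
  induction t; intros xi zeta E; simpl; f_equal; auto.
  apply IHt. intros [|n]; simpl; auto.
Qed.

Lemma subst_ext t : forall s r, (forall n, s n = r n) -> subst s t = subst r t.
Proof.
  induction t; intros s r E; simpl; f_equal; auto.
  apply IHt. intros [|n]; simpl; rewrite ?E; auto.
Qed.

Lemma ren_ren t : forall xi zeta, ren xi (ren zeta t) = ren (fun n => xi (zeta n)) t.
Proof.
  induction t; intros xi zeta; simpl; f_equal; auto.
  rewrite IHt. apply ren_ext. intros [|n]; reflexivity.
Qed.

Lemma subst_ren t : forall s xi, subst s (ren xi t) = subst (fun n => s (xi n)) t.
Proof.
  induction t; intros s xi; simpl; f_equal; auto.
  rewrite IHt. apply subst_ext. intros [|n]; reflexivity.
Qed.

Lemma ren_subst t : forall xi s, ren xi (subst s t) = subst (fun n => ren xi (s n)) t.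
Proof.
  induction t; intros xi s; simpl; f_equal; auto.
  rewrite IHt. apply subst_ext. intros [|n]; simpl; auto.
  rewrite !ren_ren. apply ren_ext. reflexivity.
Qed.

Lemma subst_subst t : forall s r, subst s (subst r t) = subst (fun n => subst s (r n)) t.
Proof.
  induction t; intros s r; simpl; f_equal; auto.
  rewrite IHt. apply subst_ext. intros [|n]; simpl; auto.
  rewrite subst_ren, ren_subst. apply subst_ext. reflexivity.
Qed.

Lemma ren_id t : ren (fun n => n) t = t.
Proof.
  induction t; simpl; f_equal; auto.
  rewrite <- IHt at 2. apply ren_ext. intros [|n]; reflexivity.
Qed.

Lemma subst_var t : subst Var t = t.
Proof.
  induction t; simpl; f_equal; auto.
  rewrite <- IHt at 2. apply subst_ext. intros [|n]; reflexivity.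
Qed.

Lemma subst_closed t : forall s, (forall n, free_in n t -> s n = Var n) -> subst s t = t.
Proof.
  induction t; intros s Hs; simpl in *; f_equal; auto.
  apply IHt. intros [|n] Hn; simpl; auto. rewrite Hs; auto.
Qed.

Definition lift_fun (d c n : nat) : nat := if n <? c then n else n + d.

Lemma lift_ren t : forall d c, lift d c t = ren (lift_fun d c) t.
Proof.
  induction t; intros d c; simpl.
  - unfold lift_fun. destruct (n <? c); auto.
  - f_equal; auto.
  - rewrite IHt. f_equal. apply ren_ext. intros [|n]; unfold lift_fun; simpl; auto.
    change (S n <? S c) with (n <? c). destruct (n <? c); auto.
Qed.

Lemma lift0 t : forall c, lift 0 c t = t.
Proof.
  intros c. rewrite lift_ren. rewrite <- (ren_id t) at 2.
  apply ren_ext. intros n; unfold lift_fun; destruct (n <? c); lia.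
Qed.

Definition subst_at_fun (j : nat) (s : term) (n : nat) : term :=
  if n =? j then lift j 0 s else if j <? n then Var (n - 1) else Var n.

Lemma subst_at_subst t : forall j s, subst_at j s t = subst (subst_at_fun j s) t.
Proof.
  induction t; intros j s; simpl; f_equal; auto.
  rewrite IHt. apply subst_ext. intros [|n]; unfold subst_at_fun; simpl; auto.
  destruct (n =? j).
  - rewrite !lift_ren, ren_ren. apply ren_ext. intros m; unfold lift_fun; simpl. lia.
  - change (S j <? S n) with (j <? n). destruct (j <? n) eqn:E; simpl; auto.
    apply Nat.ltb_lt in E. f_equal. lia.
Qed.

Definition scons0 (Q : term) (n : nat) : term :=
  match n with 0 => Q | S m => Var m end.

Lemma subst0_subst P Q : subst0 P Q = subst (scons0 Q) P.
Proof.
  unfold subst0. rewrite subst_at_subst. apply subst_ext.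
  intros [|n]; unfold subst_at_fun; simpl.
  - apply lift0.
  - f_equal; lia.
Qed.

Lemma ren_subst0 P Q xi : ren xi (subst0 P Q) = subst0 (ren (upren xi) P) (ren xi Q).
Proof.
  rewrite !subst0_subst, ren_subst, subst_ren. apply subst_ext.
  intros [|n]; reflexivity.
Qed.

Lemma subst_subst0 P Q s : subst s (subst0 P Q) = subst0 (subst (up s) P) (subst s Q).
Proof.
  rewrite !subst0_subst, !subst_subst. apply subst_ext.
  intros [|n]; simpl; auto.
  rewrite subst_ren. rewrite <- (subst_var (s n)) at 1. apply subst_ext. reflexivity.
Qed.

Inductive par : term -> term -> Prop :=
| par_var n : par (Var n) (Var n)
| par_app M M' N N' : par M M' -> par N N' -> par (App M N) (App M' N')
| par_lam M M' : par M M' -> par (Lam M) (Lam M')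
| par_beta P P' Q Q' : par P P' -> par Q Q' -> par (App (Lam P) Q) (subst0 P' Q').

Lemma par_refl t : par t t.
Proof. induction t; constructor; auto. Qed.

Lemma par_ren M M' : par M M' -> forall xi, par (ren xi M) (ren xi M').
Proof.
  induction 1; intros xi; simpl; try rewrite ren_subst0; constructor; auto.
Qed.

Lemma par_subst M M' : par M M' -> forall s r, (forall n, par (s n) (r n)) ->
  par (subst s M) (subst r M').
Proof.
  assert (Hup : forall s r, (forall n, par (s n) (r n)) -> forall n, par (up s n) (up r n)).
  { intros s r H [|n]; simpl; [constructor | apply par_ren; auto]. }
  induction 1; intros s r Hs; simpl; try rewrite subst_subst0; auto; constructor; auto.
Qed.

Lemma par_subst0 P P' Q Q' : par P P' -> par Q Q' -> par (subst0 P Q) (subst0 P' Q').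
Proof.
  intros HP HQ. rewrite !subst0_subst. apply par_subst; auto.
  intros [|n]; simpl; auto; constructor.
Qed.

(* Takahashi's complete development: contract every redex of the term at once. *)
Fixpoint full_dev (t : term) : term :=
  match t with
  | Var n => Var n
  | Lam b => Lam (full_dev b)
  | App (Lam P) b => subst0 (full_dev P) (full_dev b)
  | App a b => App (full_dev a) (full_dev b)
  end.

Lemma par_full_dev M M' : par M M' -> par M' (full_dev M).
Proof.
  induction 1; simpl.
  - constructor.
  - destruct M; simpl in *; try (constructor; auto).
    inversion H; subst. inversion IHpar1; subst. constructor; auto.
  - constructor; auto.
  - apply par_subst0; auto.
Qed.

Definition red : relation term := clos_refl_trans term beta.

Lemma red_app M M' N N' : red M M' -> red N N' -> red (App M N) (App M' N').
Proof.
  intros H1 H2. apply rt_trans with (App M' N).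
  - induction H1; [apply rt_step; constructor; auto | apply rt_refl | eapply rt_trans; eauto].
  - induction H2; [apply rt_step; constructor; auto | apply rt_refl | eapply rt_trans; eauto].
Qed.

Lemma red_lam M M' : red M M' -> red (Lam M) (Lam M').
Proof.
  induction 1; [apply rt_step; constructor; auto | apply rt_refl | eapply rt_trans; eauto].
Qed.

Lemma par_red M M' : par M M' -> red M M'.
Proof.
  induction 1.
  - apply rt_refl.
  - apply red_app; auto.
  - apply red_lam; auto.
  - eapply rt_trans; [apply red_app; [apply red_lam|]; eauto | apply rt_step; constructor].
Qed.

Lemma beta_par M M' : beta M M' -> par M M'.
Proof. induction 1; constructor; auto using par_refl. Qed.

Definition par_star : relation term := clos_refl_trans_1n term par.

Lemma par_strip M N2 : par_star M N2 -> forall N1, par M N1 ->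
  exists X, par_star N1 X /\ par N2 X.
Proof.
  induction 1 as [|x y N2 Hxy Hy IH]; intros N1 H1.
  - exists N1. split; [constructor | auto].
  - destruct (IH (full_dev x) (par_full_dev _ _ Hxy)) as [X [HX1 HX2]].
    exists X. split; auto. econstructor; eauto using par_full_dev.
Qed.

Lemma par_star_confluent M N1 : par_star M N1 -> forall N2, par_star M N2 ->
  exists X, par_star N1 X /\ par_star N2 X.
Proof.
  induction 1 as [|x y N1 Hxy Hy IH]; intros N2 H2.
  - exists N2. split; [auto | constructor].
  - destruct (par_strip _ _ H2 _ Hxy) as [X [HX1 HX2]].
    destruct (IH _ HX1) as [Z [HZ1 HZ2]].
    exists Z. split; auto. econstructor; eauto.
Qed.

Lemma red_par_star M N : red M N <-> par_star M N.
Proof.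
  split; intros H.
  - apply clos_rt_rt1n_iff in H.
    induction H; [constructor | econstructor; eauto using beta_par].
  - induction H; [apply rt_refl | eapply rt_trans; [apply par_red | ]; eauto].
Qed.

Lemma church_rosser M N : beta_conv M N -> exists X, red M X /\ red N X.
Proof.
  induction 1 as [x y H|x|x y _ [X [? ?]]|x y w _ [X [? ?]] _ [Z [? ?]]].
  - exists y. split; [apply rt_step; auto | apply rt_refl].
  - exists x. split; apply rt_refl.
  - exists X; auto.
  - destruct (par_star_confluent y X (proj1 (red_par_star _ _) H0)
                Z (proj1 (red_par_star _ _) H1)) as [W [HW1 HW2]].
    exists W. split; eapply rt_trans; eauto; apply red_par_star; auto.
Qed.

Lemma red_beta_conv M N : red M N -> beta_conv M N.
Proof.
  induction 1; [apply rst_step; auto | apply rst_refl | eapply rst_trans; eauto].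
Qed.

Lemma hnf_body_no_hstep B : hnf_body B -> forall X, ~ hstep B X.
Proof.
  induction 1; intros X HX; inversion HX; subst.
  - inversion H.
  - eapply IHhnf_body; eauto.
Qed.

Lemma hnf_no_hstep H : hnf H -> forall X, ~ hstep H X.
Proof.
  induction 1; intros X HX.
  - eapply hnf_body_no_hstep; eauto.
  - inversion HX; subst. eapply IHhnf; eauto.
Qed.

Lemma hsteps_from_hnf k M H : hsteps k M H -> hnf M -> k = 0 /\ H = M.
Proof.
  intros [|k' M' N P Hst _] Hh; auto.
  exfalso. exact (hnf_no_hstep _ Hh _ Hst).
Qed.

Lemma hstep_det M N1 : hstep M N1 -> forall N2, hstep M N2 -> N1 = N2.
Proof.
  induction 1; intros N2 H2; inversion H2; subst; auto.
  all: try solve [exfalso; match goal with H : ~ is_lam _ |- _ => apply H; simpl; auto end].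
  all: f_equal; auto.
Qed.

Lemma hnf_or_hstep t : hnf t \/ exists t', hstep t t'.
Proof.
  induction t as [n|t1 IH1 t2 _|t IH].
  - left; do 2 constructor.
  - destruct t1 as [n|a b|P].
    + left; do 3 constructor.
    + destruct IH1 as [H|[t' H]].
      * left. inversion H; subst. do 2 constructor; auto.
      * right. exists (App t' t2). constructor; simpl; auto.
    + right. eexists. constructor.
  - destruct IH as [H|[t' H]].
    + left; apply hnf_lam; auto.
    + right; eexists; constructor; eauto.
Qed.

Lemma hstep_subst M M' : hstep M M' -> forall s, hstep (subst s M) (subst s M').
Proof.
  induction 1; intros s; simpl.
  - rewrite subst_subst0. constructor.
  - constructor; auto. destruct M; simpl in *; auto; inversion H0.
  - constructor; auto.
Qed.

Lemma hsteps_red k M M' : hsteps k M M' -> red M M'.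
Proof.
  assert (Hb : forall M M', hstep M M' -> beta M M') by (induction 1; constructor; auto).
  induction 1; [apply rt_refl | eapply rt_trans; [apply rt_step|]; eauto].
Qed.

(* Head reduction of an instance [subst s N] first runs through the instance of
   the head reduction of [N]: by determinism, each head step of [N] is the next
   head step of the instance. *)
Lemma hsteps_subst_hnf s k : forall N H, hsteps k (subst s N) H -> hnf H ->
  exists j i Hn, j + i = k /\ hsteps j N Hn /\ hnf Hn /\ hsteps i (subst s Hn) H.
Proof.
  induction k as [|k IH]; intros N H Hs Hh;
    destruct (hnf_or_hstep N) as [Hn|[N' HN']].
  - exists 0, 0, N. repeat split; auto; constructor.
  - inversion Hs; subst. exfalso. eapply hnf_no_hstep; eauto. apply hstep_subst; eauto.
  - exists 0, (S k), N. repeat split; auto; constructor.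
  - inversion Hs as [|k' M0 N0 P0 Hst Hss]; subst.
    rewrite (hstep_det _ _ Hst _ (hstep_subst _ _ HN' s)) in Hss.
    destruct (IH _ _ Hss Hh) as [j [i [Hn [E [Hs1 [Hhn Hs2]]]]]].
    exists (S j), i, Hn. repeat split; auto; [lia | econstructor; eauto].
Qed.

Lemma var_red y X : red (Var y) X -> X = Var y.
Proof.
  intros H. apply clos_rt_rt1n_iff in H.
  inversion H as [|x' X' Hb]; auto. inversion Hb.
Qed.

Lemma lam_red M X : red (Lam M) X -> exists M', X = Lam M'.
Proof.
  intros H. apply clos_rt_rt1n_iff in H. remember (Lam M) as L eqn:E. revert M E.
  induction H as [|x x' X Hb _ IH]; intros M E; subst; eauto.
  inversion Hb; subst. eauto.
Qed.

Lemma hnf_body_beta B X : hnf_body B -> beta B X -> hnf_body X.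
Proof.
  intros HB. revert X. induction HB; intros X Hb; inversion Hb; subst.
  - inversion HB.
  - constructor; auto.
  - constructor; auto.
Qed.

(* No redex is ever created at the root of an application whose function part
   is a head normal body. *)
Lemma hnf_body_app_red B N X : hnf_body B -> red (App B N) X ->
  exists B' N', X = App B' N' /\ red B B' /\ red N N'.
Proof.
  intros HB H. apply clos_rt_rt1n_iff in H. remember (App B N) as A eqn:E. revert B N HB E.
  induction H as [x|x x' X Hb _ IH]; intros B N HB E; subst.
  - exists B, N. repeat split; apply rt_refl.
  - inversion Hb as [P Q E1 E2| ? B1 ? Hb1 | ? ? N1 Hb1 | ]; subst.
    + inversion HB.
    + destruct (IH B1 N (hnf_body_beta _ _ HB Hb1) eq_refl) as [B' [N' [-> [? ?]]]].
      exists B', N'. repeat split; auto. eapply rt_trans; [apply rt_step|]; eauto.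
    + destruct (IH B N1 HB eq_refl) as [B' [N' [-> [? ?]]]].
      exists B', N'. repeat split; auto. eapply rt_trans; [apply rt_step|]; eauto.
Qed.

Lemma hnf_conv_var_app H z P : hnf H -> beta_conv H (App (Var z) P) ->
  exists N, H = App (Var z) N /\ beta_conv N P.
Proof.
  intros Hh Hc. destruct (church_rosser _ _ Hc) as [X [HX1 HX2]].
  destruct (hnf_body_app_red _ _ _ (hb_var z) HX2) as [Z [P' [-> [Hz HP]]]].
  apply var_red in Hz. subst Z.
  destruct Hh as [B HB|B _].
  - destruct HB as [y|B N HB].
    + apply var_red in HX1. discriminate.
    + destruct (hnf_body_app_red _ _ _ HB HX1) as [B' [N' [E [HBz HN]]]].
      injection E as <- <-.
      destruct HB as [y|B0 N0 HB0].
      * apply var_red in HBz. injection HBz as ->.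
        exists N. split; auto.
        eapply rst_trans; [apply red_beta_conv; eauto | apply rst_sym, red_beta_conv; auto].
      * destruct (hnf_body_app_red _ _ _ HB0 HBz) as [? [? [E _]]]. discriminate.
  - destruct (lam_red _ _ HX1) as [? E]. discriminate.
Qed.

Lemma annot_hnf_nil M k : hnf M -> annot M [] k -> k = 0.
Proof.
  intros Hh Ha. inversion Ha as [? H ? Hs|? ? ? p ? q ? _ _ Harg _ E]; subst.
  - exact (proj1 (hsteps_from_hnf _ _ _ Hs Hh)).
  - destruct p; [inversion Harg | discriminate].
Qed.

Lemma arg_at_spine y A B p N : arg_at (App (App (Var y) A) B) p N ->
  (p = [D2] /\ N = B) \/ (p = [D1; D2] /\ N = A).
Proof.
  intros Harg. inversion Harg as [|? ?|? ? p' ? Harg1]; subst; auto.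
  inversion Harg1 as [|? ?|? ? ? ? Harg2]; subst; auto. inversion Harg2.
Qed.

(* [Bprime Y f] is convertible to [App Y (Lam (bprime_body Y f))]. *)
Definition bprime_body (Y : term) (f : nat) : term :=
  App (App (Var (S f)) (Var 0))
      (App (App (Var (S f)) (Var 0))
           (App (lift 1 0 Y) (Lam (App (App (Var (S (S f))) (Var 1)) (Var 0))))).

Lemma bprime_body_subst0 Y f A : exists R,
  subst0 (bprime_body Y f) A = App (App (Var f) A) (App (App (Var f) A) R).
Proof.
  unfold subst0, bprime_body. simpl. rewrite Nat.sub_0_r, lift0. eauto.
Qed.

Section FixedPointUnfolding.

Variables (Y : term) (f z : nat).
Hypothesis Yz_fix : beta_conv (App Y (Var z)) (App (Var z) (App Y (Var z))).

Definition plug_F (n : nat) : term := if n =? z then Lam (bprime_body Y f) else Var n.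

Lemma hnf_of_plug_F N k H :
  beta_conv N (App Y (Var z)) -> hsteps k (subst plug_F N) H -> hnf H ->
  exists N1 R, beta_conv N1 (App Y (Var z)) /\
    H = App (App (Var f) (subst plug_F N1)) (App (App (Var f) (subst plug_F N1)) R).
Proof.
  intros HN Hs Hh.
  destruct (hsteps_subst_hnf _ _ _ _ Hs Hh) as [? [? [Hn [_ [Hs1 [Hhn Hs2]]]]]].
  assert (Hc : beta_conv Hn (App (Var z) (App Y (Var z)))).
  { eapply rst_trans; [apply rst_sym, red_beta_conv; eapply hsteps_red; eauto|].
    eapply rst_trans; eauto. }
  destruct (hnf_conv_var_app _ _ _ Hhn Hc) as [N1 [-> HN1]].
  destruct (bprime_body_subst0 Y f (subst plug_F N1)) as [R HR].
  exists N1, R. split; auto.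
  simpl in Hs2. unfold plug_F at 1 in Hs2. rewrite Nat.eqb_refl in Hs2.
  inversion Hs2 as [? E|? ? ? ? Hst Hss]; subst.
  - exfalso. inversion Hh as [B HB|]. inversion HB as [|? ? HB']. inversion HB'.
  - rewrite <- (hstep_det _ _ (hstep_redex _ _) _ Hst), HR in Hss.
    refine (proj2 (hsteps_from_hnf _ _ _ Hss _)). do 4 constructor.
Qed.

Lemma annot_plug_F_pos12 n : forall N k,
  beta_conv N (App Y (Var z)) -> annot (subst plug_F N) (pos12 n) k -> k = 0.
Proof.
  induction n as [|n IH]; intros N k HN Ha;
    inversion Ha as [|? H j p N' q ? Hs Hh Harg Hann EM Epos]; subst;
    destruct (hnf_of_plug_F _ _ _ HN Hs Hh) as [N1 [R [HN1 ->]]];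
    destruct (arg_at_spine _ _ _ _ _ Harg) as [[-> ->]|[-> ->]];
    simpl in Epos; inversion Epos; subst.
  - refine (annot_hnf_nil _ _ _ Hann). do 4 constructor.
  - eauto.
Qed.

End FixedPointUnfolding.

Theorem lemma5p2 : forall (Y : term) (f n k : nat),
  fpc Y -> annot (Bprime Y f) (pos12 n) k -> k = 0.
Proof.
  intros Y f n k [z [Hz Hfix]] Ha.
  assert (Hplug : subst (plug_F Y f z) (App Y (Var z)) = Bprime Y f).
  { simpl. unfold plug_F at 2. rewrite Nat.eqb_refl, subst_closed; auto.
    intros m Hm. unfold plug_F. destruct (Nat.eqb_spec m z); subst; tauto. }
  rewrite <- Hplug in Ha.
  eapply annot_plug_F_pos12; eauto. apply rst_refl.
Qed.
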